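(* For all positive integers $b_1,\dots,b_s$ and $\gamma$, the series $\widetilde H_{b_1,\dots,b_s}(z)$, with coefficients reduced modulo $3^\gamma$, can be expressed as a linear combination with coefficients in $(\mathbb Z/3^\gamma\mathbb Z)[z,(1+z)^{-1}]$ of the series $1$ and of finitely many series $\widetilde H_{a_1,\dots,a_r}(z)$ ($r\ge1$) in which none of the $a_i$ is divisible by $3$.
   Context: For positive integers $a_1,\dots,a_r$, $$\widetilde H_{a_1,\dots,a_r}(z)=\sum_{k_1>\dots>k_r\ge0}\prod_{j=1}^{r}\left(\frac{z^{3^{k_j}}(1+z^{3^{k_j}})}{1+z^{3^{k_j+1}}}\right)^{a_j},$$ a formal power series in $z$ with integer coefficients (rational functions expanded as power series in $z$); $\widetilde H_{\emptyset}=1$. *)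

From HB Require Import structures.
From mathcomp Require Import all_boot all_order all_algebra.
Set Implicit Arguments. Unset Strict Implicit. Unset Printing Implicit Defensive.
Import Order.TTheory GRing.Theory Num.Theory.
Local Open Scope ring_scope.

Definition series (R : Type) := nat -> R.

Section Series.
Variable R : nzRingType.

Definition sone : series R := fun n => (n == 0%N)%:R.
Definition sprod (f g : series R) : series R :=
  fun n => \sum_(i < n.+1) f i * g (n - i)%N.
Definition spow (f : series R) (a : nat) : series R := iter a (sprod f) sone.
Definition spoly (p : {poly R}) : series R := fun n => p`_n.
(* the power series expansion of (1+z)^{-1} = sum_n (-1)^n z^n *)
Definition inv1pz : series R := fun n => (-1) ^+ n.
(* the element p(z) * (1+z)^{-m} of R[z,(1+z)^{-1}], as a power series *)
Definition laur (c : {poly R} * nat) : series R :=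
  sprod (spoly c.1) (spow inv1pz c.2).
End Series.

Definition red (gamma : nat) (f : series int) : series 'Z_(3 ^ gamma) :=
  fun n => (f n)%:~R.

(* t_k(z) = z^{3^k}(1+z^{3^k}) / (1+z^{3^{k+1}}), expanded as a power series:
   numerator z^{3^k} + z^{2*3^k} times 1/(1+z^{3^{k+1}}) = sum_j (-1)^j z^{j 3^{k+1}} *)
Definition tfac (k : nat) : series int :=
  sprod (fun n => ((n == 3 ^ k)%N + (n == 2 * 3 ^ k)%N)%:R)
        (fun n => if (3 ^ k.+1 %| n)%N then (-1) ^+ (n %/ 3 ^ k.+1) else 0).

(* Gt a K = sum_{K > k_1 > ... > k_r >= 0} prod_j t_{k_j}^{a_j}  (finite sum) *)
Fixpoint Gt (a : seq nat) (K : nat) : series int :=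
  match a with
  | [::] => sone int
  | a1 :: a' => fun n => \sum_(k < K) sprod (spow (tfac k) a1) (Gt a' k) n
  end.

(* Htilde a = sum_{k_1 > ... > k_r >= 0} prod_j t_{k_j}^{a_j}.
   As a formal sum: t_k has z-adic valuation 3^k, so all terms with
   k_1 >= n+1 have valuation >= 3^(n+1) > n and do not contribute to the
   coefficient of z^n; hence that coefficient is the one of the partial
   sum over k_1 < n+1. Htilde [::] = 1. *)
Definition Htilde (a : seq nat) : series int := fun n => Gt a n.+1 n.

From HB Require Import structures.
From mathcomp Require Import all_boot all_order all_algebra.
From mathcomp Require Import boolp ring zify.
Set Implicit Arguments. Unset Strict Implicit. Unset Printing Implicit Defensive.
Import GRing.Theory.
Local Open Scope ring_scope.

(* Work over any commutative ring R with 3^gamma = 0.  Power series over R form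
   a ring, containing the subring A = R[z, (1+z)^-1] ([laurent]).  Write
   t_k = z^(3^k)(1+z^(3^k))/(1+z^(3^(k+1))), so that H~_b is the formal multiple
   sum  sum_(k_1 > ... > k_r) prod_i t_(k_i)^(b_i)  ([msum] of the monomials
   X^(b_i)).  The key facts are:
   - t_k^3 = t_(k+1) (1 + 3 t_k - 3 t_k^3), hence t_(k+1) = Q(t_k) for an explicit
     polynomial Q, and X^(3c) = Q^c - 3 C_c with C_c divisible by X^(3c);
   - t_0 lies in A, and t_k has z-adic valuation 3^k, so formal multiple sums
     with polynomial slots are well defined and multilinear in the slots.
   Substituting X^(3c) = Q^c - 3 C_c in a slot and reindexing k -> k+1 turns a
   multiple sum with a slot X^(3c) into one with the slot X^c (same length,
   smaller total weight), sums with fewer slots, and 3 times a sum.  An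
   induction on (gamma - 3-adic factor, number of slots, total weight), using
   multilinearity to reduce general slots to monomials with coefficients in A,
   shows that every such sum lies in the A-module spanned by 1 and the H~_a with
   no a_i divisible by 3 ([hspan]). *)

Section SeriesRing.
Variable R : comNzRingType.
Implicit Types f g h : series R.

Lemma series_ext f g : (forall n, f n = g n) -> f = g.
Proof. exact: funext. Qed.

Definition sadd f g : series R := fun n => f n + g n.
Definition sopp f : series R := fun n => - f n.
Definition szero : series R := fun=> 0.

Fact saddA : associative sadd.
Proof. by move=> f g h; apply: series_ext => n; rewrite /sadd addrA. Qed.
Fact saddC : commutative sadd.
Proof. by move=> f g; apply: series_ext => n; rewrite /sadd addrC. Qed.
Fact sadd0 : left_id szero sadd.
Proof. by move=> f; apply: series_ext => n; rewrite /sadd add0r. Qed.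
Fact saddN : left_inverse szero sopp sadd.
Proof. by move=> f; apply: series_ext => n; rewrite /sadd /sopp addNr. Qed.

HB.instance Definition _ := Choice.copy (series R) (nat -> R).
HB.instance Definition _ := GRing.isZmodule.Build (series R) saddA saddC sadd0 saddN.

(* The coefficients of index <= n of a Cauchy product only involve the
   coefficients of index <= n of the factors, so ring laws of sprod can be
   read off the polynomial truncations  \poly_(i < n.+1) f i. *)
Definition trunc n f : {poly R} := \poly_(i < n.+1) f i.

Lemma coef_trunc n f i : (i <= n)%N -> (trunc n f)`_i = f i.
Proof. by move=> le_in; rewrite coef_poly ltnS le_in. Qed.

Lemma coefM_sprod n f g (p q : {poly R}) :
  (forall i, (i <= n)%N -> p`_i = f i) -> (forall i, (i <= n)%N -> q`_i = g i) ->
  forall k, (k <= n)%N -> (p * q)`_k = sprod f g k.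
Proof.
move=> pf qg k le_kn; rewrite coefM /sprod; apply: eq_bigr => i _.
rewrite pf ?qg //; last exact: leq_trans (leq_ord i) le_kn.
exact: leq_trans (leq_subr _ _) le_kn.
Qed.

Fact sprodA : associative (@sprod R).
Proof.
move=> f g h; apply: series_ext => n.
have fg := coefM_sprod (@coef_trunc n f) (@coef_trunc n g).
have gh := coefM_sprod (@coef_trunc n g) (@coef_trunc n h).
rewrite -(coefM_sprod (coef_trunc f) gh) // -(coefM_sprod fg (coef_trunc h)) //.
by rewrite mulrA.
Qed.

Fact sprodC : commutative (@sprod R).
Proof.
move=> f g; apply: series_ext => n.
rewrite -(coefM_sprod (@coef_trunc n f) (@coef_trunc n g)) //.
by rewrite -(coefM_sprod (@coef_trunc n g) (@coef_trunc n f)) // mulrC.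
Qed.

Fact sprod1 : left_id (sone R) (@sprod R).
Proof.
move=> f; apply: series_ext => n.
have one_trunc i : (i <= n)%N -> (1 : {poly R})`_i = sone R i.
  by rewrite coefC /sone; case: i.
by rewrite -(coefM_sprod one_trunc (@coef_trunc n f)) // mul1r coef_trunc.
Qed.

Fact sprodDl : left_distributive (@sprod R) sadd.
Proof.
move=> f g h; apply: series_ext => n; rewrite /sprod /sadd -big_split /=.
by apply: eq_bigr => i _; rewrite mulrDl.
Qed.

Fact sone_neq0 : sone R != szero.
Proof. by apply/eqP => /(congr1 (fun f => f 0%N)) /eqP; rewrite oner_eq0. Qed.

HB.instance Definition _ :=
  GRing.Zmodule_isComNzRing.Build (series R) sprodA sprodC sprod1 sprodDl sone_neq0.

Lemma sprodE f g : sprod f g = f * g. Proof. by []. Qed.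
Lemma soneE : sone R = 1. Proof. by []. Qed.
Lemma saddE f g n : (f + g) n = f n + g n. Proof. by []. Qed.
Lemma ssubE f g n : (f - g) n = f n - g n. Proof. by []. Qed.

Lemma ssumE (I : Type) (r : seq I) (P : pred I) (F : I -> series R) n :
  (\sum_(i <- r | P i) F i) n = \sum_(i <- r | P i) F i n.
Proof. by elim/big_rec2: _ => // i a b _ <-. Qed.

Lemma spowE f a : spow f a = f ^+ a.
Proof. by elim: a => [|a IH] //=; rewrite exprS -IH. Qed.

Fact spoly_is_zmod_morphism : zmod_morphism (@spoly R).
Proof. by move=> p q; apply: series_ext => n; rewrite ssubE /spoly coefB. Qed.

Fact spoly_is_monoid_morphism : monoid_morphism (@spoly R).
Proof.
split; last by move=> p q; apply: series_ext => n; rewrite /spoly coefM.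
by apply: series_ext => n; rewrite /spoly coefC -soneE /sone; case: n.
Qed.

HB.instance Definition _ := GRing.isZmodMorphism.Build _ _ (@spoly R)
  spoly_is_zmod_morphism.
HB.instance Definition _ := GRing.isMonoidMorphism.Build _ _ (@spoly R)
  spoly_is_monoid_morphism.

End SeriesRing.

Section Reduction.
Variable R : comNzRingType.

Definition reduce (f : series int) : series R := fun n => (f n)%:~R.

Fact reduce_is_zmod_morphism : zmod_morphism reduce.
Proof. by move=> f g; apply: series_ext => n; rewrite /reduce ssubE intrB. Qed.

Fact reduce_is_monoid_morphism : monoid_morphism reduce.
Proof.
split; first by apply: series_ext => n; rewrite /reduce -!soneE /sone; case: n.
move=> f g; apply: series_ext => n; rewrite /reduce -!sprodE /sprod rmorph_sum.
by apply: eq_bigr => i _; rewrite rmorphM.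
Qed.

HB.instance Definition _ := GRing.isZmodMorphism.Build _ _ reduce
  reduce_is_zmod_morphism.
HB.instance Definition _ := GRing.isMonoidMorphism.Build _ _ reduce
  reduce_is_monoid_morphism.

End Reduction.

Section Laurent.
Variable R : comNzRingType.
Notation S := (series R).

Definition z : S := spoly 'X.
Definition w : S := inv1pz R.

Lemma laurE c : laur c = spoly c.1 * w ^+ c.2.
Proof. by rewrite /laur spowE. Qed.

Lemma coef_zXnM (f : S) m n : (z ^+ m * f) n = if (m <= n)%N then f (n - m)%N else 0.
Proof.
rewrite -rmorphXn /= -sprodE /sprod /spoly.
under eq_bigr => i _ do rewrite coefXn.
case: leqP => [le_mn | lt_nm]; last first.
  by rewrite big1 // => i _; case: eqP => [eq_im | _]; rewrite ?mul0r //;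
    move: (ltn_ord i); rewrite eq_im ltnS leqNgt lt_nm.
have lt_m_Sn : (m < n.+1)%N by rewrite ltnS.
rewrite (bigD1 (Ordinal lt_m_Sn)) //= eqxx mul1r.
by rewrite big1 ?addr0 // => i /negbTE ne_im; rewrite -val_eqE /= in ne_im; rewrite ne_im mul0r.
Qed.

Lemma w_inv : w * (1 + z) = 1.
Proof.
apply: series_ext => n; rewrite mulrDr mulr1 saddE mulrC -[z]expr1 coef_zXnM.
rewrite -soneE /sone /w /inv1pz; case: n => [|n] /=; first by rewrite addr0.
by rewrite subn1 exprS mulN1r addNr.
Qed.

Definition inv1pzXn m : S := fun n => if (m %| n)%N then (-1) ^+ (n %/ m) else 0.

Lemma inv1pzXn_inv m : (0 < m)%N -> inv1pzXn m * (1 + z ^+ m) = 1.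
Proof.
move=> m_gt0; apply: series_ext => n; rewrite mulrDr mulr1 saddE mulrC coef_zXnM.
rewrite -soneE /sone /inv1pzXn.
case: n => [|n]; first by rewrite dvdn0 div0n expr0 leqNgt m_gt0 addr0.
case: (leqP m n.+1) => [le_mn | lt_nm] /=; last first.
  by rewrite addr0; case: ifP => // /(dvdn_leq (ltn0Sn n)); rewrite leqNgt lt_nm.
rewrite dvdn_subl //; case: ifP => [dvd_mn | _]; last by rewrite addr0.
have q_gt0 : (0 < n.+1 %/ m)%N by rewrite divn_gt0.
by rewrite -{2}(mul1n m) divnBMl -{1}(subnK q_gt0) addn1 exprS mulN1r addNr.
Qed.

Definition laurent : {pred S} := fun x => `[< exists c, x = laur c >].
Arguments laurent : clear implicits.

Lemma laurentP x : reflect (exists c, x = laur c) (x \in laurent).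
Proof. exact: asboolP. Qed.

Lemma laur_laurent c : laur c \in laurent.
Proof. by apply/laurentP; exists c. Qed.

(* bringing p (1+z)^-m and q (1+z)^-m' to a common denominator *)
Lemma w_powD m m' : (1 + z) ^+ m' * w ^+ (m + m') = w ^+ m.
Proof. by rewrite exprD mulrCA -exprMn [(1 + z) * _]mulrC w_inv expr1n mulr1. Qed.

Lemma laurM (c c' : {poly R} * nat) : laur c * laur c' = laur (c.1 * c'.1, (c.2 + c'.2)%N).
Proof. by rewrite !laurE /= rmorphM exprD; ring. Qed.

Fact laurent_subring_closed : subring_closed laurent.
Proof.
split.
- by apply/laurentP; exists (1, 0%N); rewrite laurE rmorph1 mulr1.
- move=> _ _ /laurentP[[p m] ->] /laurentP[[q m'] ->]; apply/laurentP.
  exists (p * (1 + 'X) ^+ m' - q * (1 + 'X) ^+ m, (m + m')%N).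
  rewrite !laurE /= rmorphB !rmorphM !rmorphXn rmorphD rmorph1 -/z.
  by rewrite mulrBl -!mulrA w_powD addnC w_powD.
- by move=> _ _ /laurentP[c ->] /laurentP[c' ->]; rewrite laurM laur_laurent.
Qed.

HB.instance Definition _ := GRing.isSubringClosed.Build S laurent
  laurent_subring_closed.

Lemma spoly_laurent p : spoly p \in laurent.
Proof. by apply/laurentP; exists (p, 0%N); rewrite laurE mulr1. Qed.

Lemma w_laurent : w \in laurent.
Proof. by apply/laurentP; exists (1, 1%N); rewrite laurE rmorph1 mul1r. Qed.

Definition zdvd m (x : S) := exists y, x = z ^+ m * y.

Lemma zdvd_coef m x n : zdvd m x -> (n < m)%N -> x n = 0.
Proof. by move=> [y ->] lt_nm; rewrite coef_zXnM leqNgt lt_nm. Qed.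

Lemma zdvdMr m x y : zdvd m x -> zdvd m (x * y).
Proof. by move=> [u ->]; exists (u * y); rewrite mulrA. Qed.

Lemma zdvd_horner m (p : {poly S}) x : p`_0 = 0 -> zdvd m x -> zdvd m p.[x].
Proof.
move=> p0 [y ->]; rewrite horner_coef.
elim/big_rec: _ => [|[[|i] _] s _ [v ->]] /=; first by exists 0; rewrite mulr0.
  by exists v; rewrite p0 mul0r add0r.
by exists (p`_i.+1 * y * (z ^+ m * y) ^+ i + v); rewrite exprS; ring.
Qed.

End Laurent.
Arguments laurent {R}.

(* Polynomial identities over an arbitrary commutative ring, later applied with
   the t_k in the role of a and b. *)
Section Triplication.
Variable T : comNzRingType.

Lemma geometric_sum (y : T) n : (1 - y) * \sum_(j < n) y ^+ j = 1 - y ^+ n.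
Proof. by rewrite -opprB mulNr -subrX1 opprB. Qed.

(* The algebraic identity behind t_k^3 = t_(k+1) (1 + 3 t_k - 3 t_k^3), where
   t_k (1 + v^3) = v + v^2 and t_(k+1) (1 + v^9) = v^3 + v^6 for v = z^(3^k). *)
Lemma cubic_relation (a b v d1 d2 : T) :
  d1 * (1 + v ^+ 3) = 1 -> d2 * (1 + v ^+ 9) = 1 ->
  a * (1 + v ^+ 3) = v + v ^+ 2 -> b * (1 + v ^+ 9) = v ^+ 3 + v ^+ 6 ->
  a ^+ 3 = b * (1 + 3%:R * a - 3%:R * a ^+ 3).
Proof.
move=> d1_inv d2_inv ha hb; apply/eqP; rewrite -subr_eq0; apply/eqP.
set E := _ - _; set u := (1 + v ^+ 3) ^+ 3 * (1 + v ^+ 9).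
have Eu0 : E * u = 0.
  have -> : E * u = (a * (1 + v ^+ 3)) ^+ 3 * (1 + v ^+ 9) - (b * (1 + v ^+ 9)) *
      ((1 + v ^+ 3) ^+ 3 + 3%:R * (a * (1 + v ^+ 3)) * (1 + v ^+ 3) ^+ 2
       - 3%:R * (a * (1 + v ^+ 3)) ^+ 3) by rewrite /E /u; ring.
  by rewrite ha hb; ring.
have u_inv : u * (d1 ^+ 3 * d2) = 1.
  have -> : u * (d1 ^+ 3 * d2) = (d1 * (1 + v ^+ 3)) ^+ 3 * (d2 * (1 + v ^+ 9)).
    by rewrite /u; ring.
  by rewrite d1_inv d2_inv expr1n mulr1.
have -> : E = E * u * (d1 ^+ 3 * d2) by rewrite -mulrA u_inv mulr1.
by rewrite Eu0 mul0r.
Qed.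

Variable gamma : nat.
Hypothesis three_nilp : (3 ^ gamma)%:R = 0 :> T.

(* When 3^gamma = 0, the triplication relation can be solved for t_(k+1):
   it is the value at t_k of the polynomial shift_poly. *)
Definition cubic_defect : {poly T} := 'X - 'X^3.
Definition shift_poly : {poly T} :=
  'X^3 * \sum_(j < gamma) (- 3%:R * cubic_defect) ^+ j.

Lemma shift_polyE a b : a ^+ 3 = b * (1 + 3%:R * a - 3%:R * a ^+ 3) ->
  shift_poly.[a] = b.
Proof.
move=> cubic; set y := - 3%:R * (a - a ^+ 3).
have -> : shift_poly.[a] = a ^+ 3 * \sum_(j < gamma) y ^+ j.
  rewrite /shift_poly hornerM hornerXn horner_sum; congr (_ * _).
  apply: eq_bigr => j _; rewrite horner_exp hornerM hornerN -polyC_natr hornerC.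
  by rewrite /cubic_defect hornerD hornerN hornerX hornerXn.
have -> : a ^+ 3 = b * (1 - y) by rewrite cubic /y; ring.
by rewrite -mulrA geometric_sum /y exprMn exprNn -natrX three_nilp !mulr0 mul0r subr0 mulr1.
Qed.

Hypothesis gamma_gt0 : (0 < gamma)%N.

Definition shift_rem : {poly T} :=
  - cubic_defect * \sum_(j < gamma.-1) (- 3%:R * cubic_defect) ^+ j.

Lemma shift_polyE3 : shift_poly = 'X^3 * (1 + 3%:R * shift_rem).
Proof.
rewrite /shift_poly -(prednK gamma_gt0) big_ord_recl expr0 /shift_rem.
congr (_ * (_ + _)); rewrite mulrA mulrN -mulNr mulr_sumr.
by apply: eq_bigr => j _; rewrite exprS.
Qed.

Definition shift_corr (c : nat) : {poly T} :=
  'X^(3 * c) * (shift_rem * \sum_(i < c) (1 + 3%:R * shift_rem) ^+ i).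

Lemma shift_corrE c : 'X^(3 * c) = shift_poly ^+ c - 3%:R * shift_corr c.
Proof.
rewrite shift_polyE3 /shift_corr exprMn -exprM; set W := shift_rem.
have -> : (1 + 3%:R * W) ^+ c = 1 + 3%:R * W * \sum_(i < c) (1 + 3%:R * W) ^+ i.
  by rewrite -[LHS](addrNK 1) subrX1 addrAC subrr add0r addrC.
by move: ('X^(3 * c)) (\sum_(i < c) _) => x s; ring.
Qed.

End Triplication.

Section Tk.
Variable R : comNzRingType.
Notation S := (series R).

Definition t k : S := reduce R (tfac k).

Lemma tE k : t k = (z R ^+ (3 ^ k) + z R ^+ (2 * 3 ^ k)) * inv1pzXn R (3 ^ k.+1).
Proof.
rewrite /t /tfac sprodE rmorphM /=; congr (_ * _); apply: series_ext => n.
  rewrite saddE -!rmorphXn /= /spoly !coefXn /reduce.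
  by case: eqP => _; case: eqP => _; rewrite /= ?addr0 ?add0r ?mulr0n ?mulr1n ?intr0 ?intr1 //=;
    rewrite -[(1 + 1)%:R]/(2%:R) -natrD.
by rewrite /reduce /inv1pzXn; case: ifP => _ //; exact: intr_sign.
Qed.

Lemma t_rel k : t k * (1 + z R ^+ (3 ^ k.+1)) = z R ^+ (3 ^ k) + z R ^+ (2 * 3 ^ k).
Proof. by rewrite tE -mulrA inv1pzXn_inv ?mulr1 // expn_gt0. Qed.

Lemma t_zdvd k : zdvd (3 ^ k) (t k).
Proof.
rewrite tE; exists ((1 + z R ^+ (3 ^ k)) * inv1pzXn R (3 ^ k.+1)).
by rewrite mulrA mulrDr mulr1 -exprD mul2n -addnn.
Qed.

Lemma t_cubic k : t k ^+ 3 = t k.+1 * (1 + 3%:R * t k - 3%:R * t k ^+ 3).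
Proof.
set v := z R ^+ (3 ^ k).
have zv n : z R ^+ (n * 3 ^ k) = v ^+ n by rewrite /v -exprM mulnC.
have e3 : z R ^+ (3 ^ k.+1) = v ^+ 3 by rewrite -zv expnS.
have e9 : z R ^+ (3 ^ k.+2) = v ^+ 9 by rewrite -zv !expnS mulnA.
apply: (@cubic_relation _ _ _ v (inv1pzXn R (3 ^ k.+1)) (inv1pzXn R (3 ^ k.+2))).
- by rewrite -e3 inv1pzXn_inv // expn_gt0.
- by rewrite -e9 inv1pzXn_inv // expn_gt0.
- by rewrite -e3 t_rel zv.
- by rewrite -e9 t_rel -!zv expnS mulnA.
Qed.

Variable gamma : nat.
Hypothesis three_nilp : (3 ^ gamma)%:R = 0 :> R.

Lemma three_nilp_series : (3 ^ gamma)%:R = 0 :> S.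
Proof. by rewrite -(rmorph_nat (@spoly R)) -polyC_natr three_nilp rmorph0. Qed.

Lemma t_shift k : (shift_poly S gamma).[t k] = t k.+1.
Proof. by apply: shift_polyE; [exact: three_nilp_series | exact: t_cubic]. Qed.

(* t_0 = z / (1 - z + z^2) lies in R[z, (1+z)^-1], since
   (1 - z + z^2) = (1+z)^2 (1 - 3 z w^2) and 3 z w^2 is nilpotent. *)
Lemma t0_laurent : t 0 \in laurent.
Proof.
set T := t 0; set Z := z R; set W := w R; set y := 3%:R * Z * W ^+ 2.
have T_rel : T * (1 + Z ^+ 3) = Z + Z ^+ 2.
  by have := t_rel 0; rewrite expn0 expn1 muln1 expr1.
have wZ : W * (1 + Z) = 1 := @w_inv R.
have T_lin : T * (1 - y) = Z * W ^+ 2.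
  have -> : T * (1 - y) = T * (1 + Z ^+ 3) * W ^+ 3 + (1 - W * (1 + Z)) *
      (T * (1 + W * (1 + Z) + (W * (1 + Z)) ^+ 2) - 3%:R * T * Z * W ^+ 2).
    by rewrite /y; ring.
  rewrite T_rel wZ subrr mul0r addr0.
  have -> : (Z + Z ^+ 2) * W ^+ 3 = Z * W ^+ 2 * (W * (1 + Z)) by ring.
  by rewrite wZ mulr1.
have -> : T = Z * W ^+ 2 * \sum_(j < gamma) y ^+ j.
  by rewrite -T_lin -mulrA geometric_sum /y !exprMn -natrX three_nilp_series !mul0r subr0 mulr1.
rewrite rpredM ?rpred_sum // => [|j _]; last first.
  by rewrite rpredX // !rpredM ?rpred_nat ?rpredX ?spoly_laurent ?w_laurent.
by rewrite rpredM ?rpredX ?spoly_laurent ?w_laurent.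
Qed.

End Tk.

Section NestedSums.
Variable T : comNzRingType.
Variable u : nat -> T.
Implicit Types (pre suf : seq {poly T}) (F G : nat -> T).

(* nsum_with [:: f_1; ...; f_r] F K
     = sum_(K > k_1 > ... > k_r >= 0) f_1(u k_1) ... f_r(u k_r) F(k_r)   *)
Fixpoint nsum_with pre F K : T :=
  if pre is f :: pre' then \sum_(k < K) f.[u k] * nsum_with pre' F k else F K.

Definition nsum fs : nat -> T := nsum_with fs (fun=> 1).

Lemma nsum_with_nil F K : nsum_with [::] F K = F K. Proof. by []. Qed.

Lemma nsum_with_cons f pre F K :
  nsum_with (f :: pre) F K = \sum_(k < K) f.[u k] * nsum_with pre F k.
Proof. by []. Qed.

Lemma nsum_cons f fs K : nsum (f :: fs) K = \sum_(k < K) f.[u k] * nsum fs k.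
Proof. by []. Qed.

Lemma nsum_cons0 f fs : nsum (f :: fs) 0 = 0.
Proof. by rewrite nsum_cons big_ord0. Qed.

Lemma nsum_consS f fs K : nsum (f :: fs) K.+1 = nsum (f :: fs) K + f.[u K] * nsum fs K.
Proof. by rewrite !nsum_cons big_ord_recr. Qed.

Lemma nsum_with_cat pre suf F K :
  nsum_with (pre ++ suf) F K = nsum_with pre (nsum_with suf F) K.
Proof. by elim: pre K => //= f pre IH K; apply: eq_bigr => k _; rewrite IH. Qed.

Lemma nsum_cat pre suf K : nsum (pre ++ suf) K = nsum_with pre (nsum suf) K.
Proof. exact: nsum_with_cat. Qed.

Lemma eq_nsum_with pre F G K : (forall k, F k = G k) ->
  nsum_with pre F K = nsum_with pre G K.
Proof. by move=> eqFG; elim: pre K => //= f pre IH K; apply: eq_bigr => k _; rewrite IH. Qed.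

Lemma nsum_withD pre F G K :
  nsum_with pre (fun k => F k + G k) K = nsum_with pre F K + nsum_with pre G K.
Proof.
by elim: pre K => //= f pre IH K; rewrite -big_split; apply: eq_bigr => k _; rewrite IH mulrDr.
Qed.

Lemma nsum_withZ pre a F K :
  nsum_with pre (fun k => a * F k) K = a * nsum_with pre F K.
Proof.
elim: pre K => //= f pre IH K; rewrite mulr_sumr; apply: eq_bigr => k _.
by rewrite IH mulrCA.
Qed.

Lemma nsum_withB pre F G K :
  nsum_with pre (fun k => F k - G k) K = nsum_with pre F K - nsum_with pre G K.
Proof.
rewrite nsum_withD -mulN1r -nsum_withZ; congr (_ + _).
by apply: eq_nsum_with => k; rewrite mulN1r.
Qed.

Lemma nsum_with_sum pre (I : Type) (r : seq I) (P : pred I) (F : I -> nat -> T) K :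
  nsum_with pre (fun k => \sum_(i <- r | P i) F i k) K
  = \sum_(i <- r | P i) nsum_with pre (F i) K.
Proof.
elim: r => [|i r IH]; last first.
  rewrite big_cons -IH; under eq_nsum_with => k do rewrite big_cons.
  by case: (P i) => //; exact: nsum_withD.
rewrite big_nil (@eq_nsum_with _ _ (fun k => 0 * 1)) => [|k]; last by rewrite big_nil mul0r.
by rewrite nsum_withZ mul0r.
Qed.

Lemma nsum_lin pre p suf K :
  nsum (pre ++ p :: suf) K = \sum_(i < size p) p`_i * nsum (pre ++ 'X^i :: suf) K.
Proof.
under [RHS]eq_bigr => i _ do rewrite nsum_cat -nsum_withZ.
rewrite nsum_cat -nsum_with_sum; apply: eq_nsum_with => k.
rewrite nsum_cons; under eq_bigr => j _ do rewrite horner_coef mulr_suml.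
rewrite exchange_big; apply: eq_bigr => i _; rewrite nsum_cons mulr_sumr.
by apply: eq_bigr => j _; rewrite hornerXn mulrA.
Qed.

End NestedSums.
Arguments nsum : simpl never.

(* When u_(k+1) = Q(u_k) and X^(3c) = Q^c - 3 corr, a slot X^(3c) can be
   replaced by the slot X^c at the price of an index shift. *)
Section CubeReduction.
Variable T : comNzRingType.
Variable u : nat -> T.
Implicit Types (pre suf : seq {poly T}).
Local Notation nsum := (nsum u).
Local Notation nsum_with := (nsum_with u).

(* the multiple sum in which the last index of pre may equal the first index
   of tail:  sum_(K > k_1 > ... > k_p >= k'_1 > k'_2 > ... >= 0) *)
Definition nsum_shift pre tail K : T := nsum_with pre (fun k => nsum tail k.+1) K.

(* splitting k'_1 <= k_p into k'_1 < k_p and k'_1 = k_p *)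
Lemma nsum_shift_rcons pre g h suf K :
  nsum_shift (rcons pre g) (h :: suf) K =
  nsum (rcons pre g ++ h :: suf) K + nsum (pre ++ (g * h) :: suf) K.
Proof.
rewrite /nsum_shift -cats1 !nsum_cat !nsum_with_cat -nsum_withD.
apply: eq_nsum_with => k; rewrite !nsum_with_cons nsum_cons -big_split.
by apply: eq_bigr => j _; rewrite !nsum_with_nil nsum_consS hornerM mulrDr mulrA.
Qed.

Variables (Q corr : {poly T}) (c : nat).
Hypothesis u_shift : forall k, Q.[u k] = u k.+1.
Hypothesis cube_split : 'X^(3 * c) = Q ^+ c - 3%:R * corr.

Lemma horner_cube k : ('X^(3 * c)).[u k] = u k.+1 ^+ c - 3%:R * corr.[u k].
Proof.
by rewrite cube_split hornerD hornerN hornerM -polyC_natr hornerC horner_exp u_shift.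
Qed.

Lemma nsum_cube_last K :
  nsum [:: 'X^(3 * c)] K = nsum [:: 'X^c] K.+1 - u 0 ^+ c - 3%:R * nsum [:: corr] K.
Proof.
rewrite !nsum_cons big_ord_recl /= hornerXn !mulr1 mulr_sumr.
under eq_bigr => k _ do rewrite mulr1 horner_cube.
under [in RHS]eq_bigr => k _ do rewrite hornerXn mulr1.
by rewrite sumrB; under [X in _ = _ - X]eq_bigr => k _ do rewrite mulr1; ring.
Qed.

Lemma nsum_cube_cons f suf K :
  nsum ('X^(3 * c) :: f :: suf) K =
  nsum ('X^c :: f :: suf) K.+1 - nsum ((Q ^+ c * f) :: suf) K
    - 3%:R * nsum (corr :: f :: suf) K.
Proof.
rewrite [nsum ('X^c :: _) _]nsum_cons big_ord_recl nsum_cons0 mulr0 add0r.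
rewrite !nsum_cons mulr_sumr -!sumrB; apply: eq_bigr => k _.
rewrite nsum_consS (horner_cube k) hornerXn hornerM horner_exp u_shift /=.
ring.
Qed.

Lemma nsum_cube_last_pre pre K :
  nsum (pre ++ [:: 'X^(3 * c)]) K =
  nsum_shift pre [:: 'X^c] K - u 0 ^+ c * nsum pre K - 3%:R * nsum (pre ++ [:: corr]) K.
Proof.
rewrite !nsum_cat; under eq_nsum_with => k do rewrite nsum_cube_last.
rewrite !nsum_withB nsum_withZ; congr (_ - _ - _).
by rewrite -nsum_withZ; apply: eq_nsum_with => k; rewrite mulr1.
Qed.

Lemma nsum_cube_cons_pre pre f suf K :
  nsum (pre ++ 'X^(3 * c) :: f :: suf) K =
  nsum_shift pre ('X^c :: f :: suf) K - nsum (pre ++ (Q ^+ c * f) :: suf) K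
    - 3%:R * nsum (pre ++ corr :: f :: suf) K.
Proof.
rewrite !nsum_cat; under eq_nsum_with => k do rewrite nsum_cube_cons.
by rewrite !nsum_withB nsum_withZ.
Qed.

End CubeReduction.

(* Formal multiple sums over the t_k: limits of the truncated sums, which
   stabilise coefficientwise because t_k has valuation 3^k. *)
Section FormalSums.
Variable R : comNzRingType.
Notation S := (series R).
Implicit Types (fs pre suf : seq {poly S}) (p : {poly S}).

(* polynomials without constant term: their values at t_k have valuation >= 3^k *)
Definition vanishing fs := all (fun p => p`_0 == 0) fs.

Lemma vanishing_cons p fs : vanishing (p :: fs) = (p`_0 == 0) && vanishing fs.
Proof. by []. Qed.

Lemma vanishing_cat pre suf : vanishing (pre ++ suf) = vanishing pre && vanishing suf.
Proof. exact: all_cat. Qed.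

(* the formal multiple sum  sum_(k_1 > ... > k_r >= 0) prod_i f_i(t_(k_i)):
   its n-th coefficient is that of the truncation at k_1 <= n. *)
Definition msum fs : S := fun n => nsum (@t R) fs n.+1 n.

Lemma msum_nil : msum [::] = 1. Proof. by []. Qed.

Lemma nsum_stable fs K n : vanishing fs -> (n < K)%N -> nsum (@t R) fs K n = msum fs n.
Proof.
case: fs => [//|f fs]; rewrite vanishing_cons => /andP[/eqP f0 _] lt_nK.
rewrite -(subnKC lt_nK) /msum.
elim: (K - n.+1)%N => [|m IH]; first by rewrite addn0.
rewrite addnS nsum_consS saddE IH [X in _ + X](@zdvd_coef _ (3 ^ (n.+1 + m))) ?addr0 //.
  by apply: zdvdMr; apply: zdvd_horner => //; apply: t_zdvd.
apply: (@leq_trans (n.+1 + m)); first exact: leq_addr.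
exact: ltnW (ltn_expl _ (isT : (1 < 3)%N)).
Qed.

Lemma nsumM_stable (x : S) fs K n : vanishing fs -> (n < K)%N ->
  (x * nsum (@t R) fs K) n = (x * msum fs) n.
Proof.
move=> fs0 lt_nK; rewrite -!sprodE /sprod; apply: eq_bigr => i _; congr (_ * _).
by apply: nsum_stable => //; apply: leq_ltn_trans lt_nK; apply: leq_subr.
Qed.

Lemma msum_lin pre p suf : vanishing pre -> vanishing suf -> p`_0 = 0 ->
  msum (pre ++ p :: suf) = \sum_(i < size p) p`_i * msum (pre ++ 'X^i :: suf).
Proof.
move=> pre0 suf0 p0; apply: series_ext => n; rewrite /msum nsum_lin !ssumE.
apply: eq_bigr => -[[|i] lt_ip] _ /=; first by rewrite p0 !mul0r.
by rewrite nsumM_stable // vanishing_cat pre0 vanishing_cons coefXn suf0 /= eqxx.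
Qed.

Definition mshift pre tail : S := fun n => nsum_shift (@t R) pre tail n.+1 n.

Lemma mshift_nil tail : vanishing tail -> mshift [::] tail = msum tail.
Proof. by move=> tail0; apply: series_ext => n; apply: nsum_stable. Qed.

Lemma mshift_rcons pre g h suf :
  mshift (rcons pre g) (h :: suf) =
  msum (rcons pre g ++ h :: suf) + msum (pre ++ (g * h) :: suf).
Proof. by apply: series_ext => n; rewrite /mshift nsum_shift_rcons. Qed.

Variable gamma : nat.
Hypothesis three_nilp : (3 ^ gamma)%:R = 0 :> R.
Hypothesis gamma_gt0 : (0 < gamma)%N.
Notation Q := (shift_poly S gamma).
Notation corr := (shift_corr S gamma).

Lemma corr0 c : (0 < c)%N -> (corr c)`_0 = 0.
Proof. by move=> c_gt0; rewrite coefXnM muln_gt0 c_gt0. Qed.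

Lemma msum_cube_last pre c : (0 < c)%N -> vanishing pre ->
  msum (pre ++ [:: 'X^(3 * c)]) =
  mshift pre [:: 'X^c] - t R 0 ^+ c * msum pre - 3%:R * msum (pre ++ [:: corr c]).
Proof.
move=> c_gt0 pre0; apply: series_ext => n.
rewrite /msum (nsum_cube_last_pre (t_shift three_nilp) (@shift_corrE S gamma gamma_gt0 c)).
rewrite !ssubE !(@nsumM_stable _ _ n.+1) //.
by rewrite vanishing_cat pre0 vanishing_cons corr0 // eqxx.
Qed.

Lemma msum_cube_cons pre c (f : {poly S}) suf : (0 < c)%N -> vanishing pre -> f`_0 = 0 ->
  vanishing suf ->
  msum (pre ++ 'X^(3 * c) :: f :: suf) =
  mshift pre ('X^c :: f :: suf) - msum (pre ++ (Q ^+ c * f) :: suf)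
    - 3%:R * msum (pre ++ corr c :: f :: suf).
Proof.
move=> c_gt0 pre0 f0 suf0; apply: series_ext => n.
rewrite /msum (nsum_cube_cons_pre (t_shift three_nilp) (@shift_corrE S gamma gamma_gt0 c)).
rewrite !ssubE !(@nsumM_stable _ _ n.+1) //.
by rewrite vanishing_cat pre0 !vanishing_cons corr0 // f0 eqxx.
Qed.

End FormalSums.

Section Span.
Variable R : comNzRingType.
Notation S := (series R).

Definition admissible (a : seq nat) :=
  (a != [::]) && all (fun x => (0 < x)%N && ~~ (3 %| x)%N) a.

Definition hspan : {pred S} := fun x =>
  `[< exists (c0 : {poly R} * nat) (L : seq (({poly R} * nat) * seq nat)),
        all (fun t => admissible t.2) L /\
        x = laur c0 + \sum_(t <- L) laur t.1 * reduce R (Htilde t.2) >].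

Lemma laurent_hspan x : x \in laurent -> x \in hspan.
Proof. by case/laurentP=> c ->; apply/asboolP; exists c, [::]; rewrite big_nil addr0. Qed.

Lemma Htilde_hspan a : admissible a -> reduce R (Htilde a) \in hspan.
Proof.
move=> adm_a; apply/asboolP; exists (0, 0%N), [:: ((1, 0%N), a)].
split; first by rewrite /= adm_a.
by rewrite big_seq1 !laurE /= rmorph0 rmorph1 expr0 mul0r !mul1r add0r.
Qed.

Lemma hspan_mull l x : l \in laurent -> x \in hspan -> l * x \in hspan.
Proof.
move=> /laurentP[cl ->] /asboolP[c0 [L [adm_L ->]]]; apply/asboolP.
exists (cl.1 * c0.1, (cl.2 + c0.2)%N), [seq ((cl.1 * t.1.1, (cl.2 + t.1.2)%N), t.2) | t <- L].
split; first by rewrite all_map.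
rewrite mulrDr laurM big_map mulr_sumr; congr (_ + _); apply: eq_bigr => t _.
by rewrite mulrA laurM.
Qed.

Fact hspan_zmod_closed : zmod_closed hspan.
Proof.
split=> [|_ y /asboolP[c1 [L1 [adm1 ->]]] y_span].
  by apply: laurent_hspan; apply: rpred0.
have N1_laurent : -1 \in @laurent R by rewrite rpredN rpred1.
have /asboolP[c2 [L2 [adm2 e2]]] := hspan_mull N1_laurent y_span.
rewrite -mulN1r e2.
have /laurentP[c3 e3] := rpredD (laur_laurent c1) (laur_laurent c2).
apply/asboolP; exists c3, (L1 ++ L2); split; first by rewrite all_cat adm1 adm2.
by rewrite big_cat -e3 addrACA.
Qed.

HB.instance Definition _ := GRing.isZmodClosed.Build S hspan hspan_zmod_closed.

End Span.
Arguments hspan {R}.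

Section Slots.
Variable R : comNzRingType.
Notation S := (series R).
Implicit Types (fs : seq {poly S}) (a : seq nat).

Definition monomials a : seq {poly S} := map (fun x => 'X^x) a.

Lemma Htilde_msum a : reduce R (Htilde a) = msum (monomials a).
Proof.
suff Gt_nsum K : reduce R (Gt a K) = nsum (@t R) (monomials a) K.
  by apply: series_ext => n; rewrite /msum -Gt_nsum.
elim: a K => [|x a IH] K; first exact: rmorph1.
have -> : Gt (x :: a) K = \sum_(k < K) tfac k ^+ x * Gt a k.
  by apply: series_ext => n; rewrite ssumE; apply: eq_bigr => k _; rewrite spowE.
rewrite rmorph_sum nsum_cons; apply: eq_bigr => k _.
by rewrite rmorphM rmorphXn /= IH hornerXn.
Qed.

Definition slot (p : {poly S}) := (p`_0 == 0) && (p \is a polyOver laurent).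

Lemma slot_vanishing fs : all slot fs -> vanishing fs.
Proof. by apply: sub_all => p /andP[]. Qed.

Lemma slot_XnM m p : (0 < m)%N -> p \is a polyOver laurent -> slot ('X^m * p).
Proof. by move=> m_gt0 p_laur; rewrite /slot coefXnM m_gt0 eqxx rpredM ?polyOverXn. Qed.

Lemma slot_Xn m : (0 < m)%N -> slot 'X^m.
Proof. by move=> m_gt0; rewrite -[_ ^+ m]mulr1 slot_XnM ?rpred1. Qed.

Lemma slot_monomials a : all (fun x => 0 < x)%N a -> all slot (monomials a).
Proof. by rewrite all_map; apply: sub_all => x; apply: slot_Xn. Qed.

Variable gamma : nat.
Notation Q := (shift_poly S gamma).
Notation corr := (shift_corr S gamma).

Lemma cubic_defect_laurent : cubic_defect S \is a polyOver laurent.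
Proof. by rewrite rpredB ?polyOverX ?polyOverXn. Qed.

Lemma shift_poly_laurent : Q \is a polyOver laurent.
Proof.
rewrite rpredM ?polyOverXn ?rpred_sum // => j _.
by rewrite rpredX ?rpredM ?rpredN ?rpred_nat ?cubic_defect_laurent.
Qed.

Lemma shift_rem_laurent : shift_rem S gamma \is a polyOver laurent.
Proof.
rewrite rpredM ?rpredN ?cubic_defect_laurent ?rpred_sum // => j _.
by rewrite rpredX ?rpredM ?rpredN ?rpred_nat ?cubic_defect_laurent.
Qed.

Lemma slot_corr c : (0 < c)%N -> slot (corr c).
Proof.
move=> c_gt0; rewrite slot_XnM ?muln_gt0 ?c_gt0 // rpredM ?shift_rem_laurent ?rpred_sum //.
by move=> i _; rewrite rpredX // rpredD ?rpred1 // rpredM ?rpred_nat ?shift_rem_laurent.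
Qed.

Lemma slot_shift_polyXn c b : (0 < b)%N -> slot (Q ^+ c * 'X^b).
Proof. by move=> b_gt0; rewrite mulrC slot_XnM ?rpredX ?shift_poly_laurent. Qed.

End Slots.
Arguments slot {R}.

Section Reachability.
Variable R : comNzRingType.
Notation S := (series R).
Variable gamma : nat.
Hypothesis three_nilp : (3 ^ gamma)%:R = 0 :> R.
Hypothesis gamma_gt0 : (0 < gamma)%N.
Implicit Types (fs : seq {poly S}) (a : seq nat).
Local Notation pos := (fun x : nat => 0 < x)%N.

Definition reachable e fs := 3%:R ^+ e * msum fs \in hspan.

Lemma reachable_ge e fs : (gamma <= e)%N -> reachable e fs.
Proof.
move=> le_gamma_e; rewrite /reachable -(subnKC le_gamma_e) exprD -natrX.
by rewrite (three_nilp_series three_nilp) !mul0r rpred0.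
Qed.

(* by multilinearity it suffices to reach the sums with monomial slots *)
Lemma reachable_of_monomials e r :
  (forall a, size a = r -> all pos a -> reachable e (monomials R a)) ->
  forall fs, size fs = r -> all slot fs -> reachable e fs.
Proof.
move=> reach_mon.
suff reach_cat suf a : (size a + size suf)%N = r -> all pos a -> all slot suf ->
    reachable e (monomials R a ++ suf).
  by move=> fs size_fs slot_fs; apply: (reach_cat fs [::]).
elim: suf a => [|p suf IH] a size_a pos_a.
  by rewrite cats0 addn0 in size_a * => _; apply: reach_mon.
case/andP=> /andP[/eqP p0 /polyOverP p_laur] slot_suf.
rewrite /reachable msum_lin ?(slot_vanishing (slot_monomials _ pos_a)) ?slot_vanishing //.
rewrite mulr_sumr rpred_sum // => -[[|i] _] _ /=; first by rewrite p0 mul0r mulr0 rpred0.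
rewrite mulrCA hspan_mull //.
have -> : monomials R a ++ 'X^(i.+1) :: suf = monomials R (rcons a i.+1) ++ suf.
  by rewrite /monomials map_rcons cat_rcons.
by apply: IH => //; rewrite ?size_rcons ?all_rcons ?pos_a //; move: size_a => /=; lia.
Qed.

Section Step.
Variables (e r : nat).
Hypothesis reach_next : forall fs, all slot fs -> reachable e.+1 fs.
Hypothesis reach_shorter : forall fs, (size fs < r)%N -> all slot fs -> reachable e fs.

(* without multiples of 3 the sum is already one of the allowed H~ *)
Lemma reachable_free a : all pos a -> ~~ has (fun x => 3 %| x)%N a ->
  reachable e (monomials R a).
Proof.
case: a => [|x a] pos_a not3.
  by rewrite /reachable msum_nil mulr1 laurent_hspan // rpredX ?rpred_nat.
rewrite /reachable -Htilde_msum hspan_mull ?rpredX ?rpred_nat // Htilde_hspan //.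
by apply/allP => y y_a; rewrite (allP pos_a) // (hasPn not3).
Qed.

Variable s : nat.
Hypothesis reach_lighter : forall a, (sumn a < s)%N -> size a = r -> all pos a ->
  reachable e (monomials R a).

(* the index-shift term of the cube reduction has a lighter or shorter index *)
Lemma reachable_shift a1 c a2 : (0 < c)%N -> all pos (a1 ++ c :: a2) ->
  size (a1 ++ c :: a2) = r -> (sumn (a1 ++ c :: a2) < s)%N ->
  3%:R ^+ e * mshift (monomials R a1) ('X^c :: monomials R a2) \in hspan.
Proof.
move=> c_gt0 pos_a size_a sum_a.
case/lastP: a1 pos_a size_a sum_a => [|a1 b] pos_a size_a sum_a.
  rewrite cat0s in pos_a size_a sum_a.
  rewrite mshift_nil; first exact: (@reach_lighter (c :: a2)).
  exact: slot_vanishing (slot_monomials _ pos_a).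
have -> : monomials R (rcons a1 b) = rcons (monomials R a1) 'X^b.
  by rewrite /monomials map_rcons.
rewrite mshift_rcons mulrDr rpredD //.
  have -> : rcons (monomials R a1) 'X^b ++ 'X^c :: monomials R a2
      = monomials R (rcons a1 b ++ c :: a2) by rewrite /monomials map_cat map_rcons.
  exact: reach_lighter.
have -> : monomials R a1 ++ ('X^b * 'X^c) :: monomials R a2
    = monomials R (a1 ++ (b + c)%N :: a2) by rewrite /monomials map_cat /= exprD.
apply: reach_shorter; first by rewrite /monomials size_map -size_a !size_cat size_rcons.
apply: slot_monomials; move: pos_a; rewrite !all_cat all_rcons /= addn_gt0 c_gt0 orbT.
by case/and3P=> /andP[_ ->] _ ->.
Qed.

(* a slot X^(3c) is traded for a shift, a shorter sum and 3 times a sum *)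
Lemma reachable_cube a1 c a2 : (0 < c)%N -> all pos (a1 ++ (3 * c)%N :: a2) ->
  size (a1 ++ (3 * c)%N :: a2) = r -> (sumn (a1 ++ (3 * c)%N :: a2) <= s)%N ->
  reachable e (monomials R (a1 ++ (3 * c)%N :: a2)).
Proof.
move=> c_gt0 pos_a size_a sum_a.
have [pos_a1 pos_a2] : all pos a1 /\ all pos a2.
  by move: pos_a; rewrite all_cat /= => /and3P[].
have shift_in : 3%:R ^+ e * mshift (monomials R a1) ('X^c :: monomials R a2) \in hspan.
  apply: reachable_shift => //; first by rewrite all_cat pos_a1 /= c_gt0.
    by rewrite -size_a !size_cat.
  by move: sum_a; rewrite !sumn_cat /=; lia.
have size_a1 : (size (monomials R a1) < r)%N.
  by rewrite -size_a size_cat size_map /=; lia.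
have slot_a1 := slot_monomials R pos_a1.
case: a2 pos_a2 size_a sum_a {pos_a} shift_in => [|b a2] pos_a2 size_a sum_a shift_in.
- rewrite /reachable /monomials map_cat -/(monomials R a1) /=.
  rewrite (msum_cube_last three_nilp gamma_gt0) ?slot_vanishing // !mulrBr !rpredB //.
    by rewrite mulrCA hspan_mull ?rpredX ?(t0_laurent three_nilp) //; exact: reach_shorter.
  by rewrite mulrA -exprSr; apply: reach_next; rewrite all_cat slot_a1 /= slot_corr.
- case/andP: pos_a2 => b_gt0 pos_a2.
  rewrite /reachable /monomials map_cat -/(monomials R a1) /= -/(monomials R a2).
  rewrite (msum_cube_cons three_nilp gamma_gt0) ?slot_vanishing ?slot_monomials //;
    last by rewrite coefXn eq_sym eqn0Ngt b_gt0.
  rewrite !mulrBr !rpredB //.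
    apply: reach_shorter; first by rewrite -size_a /monomials !size_cat /= !size_map; lia.
    by rewrite all_cat slot_a1 /= slot_shift_polyXn // slot_monomials.
  rewrite mulrA -exprSr; apply: reach_next.
  by rewrite all_cat slot_a1 /= slot_corr // slot_Xn // slot_monomials.
Qed.

End Step.

Lemma reachable_monomials e r :
  (forall fs, all slot fs -> reachable e.+1 fs) ->
  (forall fs, (size fs < r)%N -> all slot fs -> reachable e fs) ->
  forall a, size a = r -> all pos a -> reachable e (monomials R a).
Proof.
move=> reach_next reach_shorter a; have [s] := ubnP (sumn a).
elim: s a => // s IHs a sum_a size_a pos_a.
have [/hasP[x x_a /dvdnP[c def_x]] | not3] := boolP (has (fun x => 3 %| x)%N a);
  last exact: reachable_free.
move: sum_a size_a pos_a; case/splitPr: x_a => a1 a2 sum_a size_a pos_a.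
have c_gt0 : (0 < c)%N.
  by move: pos_a; rewrite all_cat /= def_x muln_gt0 => /and3P[_ /andP[]].
rewrite def_x mulnC in sum_a size_a pos_a *.
exact: (reachable_cube reach_next reach_shorter IHs).
Qed.

Lemma reachable_all d e fs : (gamma <= e + d)%N -> all slot fs -> reachable e fs.
Proof.
elim: d e fs => [|d IHd] e fs le_gamma slot_fs.
  by apply: reachable_ge; rewrite addn0 in le_gamma.
have reach_next fs' : all slot fs' -> reachable e.+1 fs'.
  by apply: IHd; rewrite addSnnS.
have [r] := ubnP (size fs); elim: r fs slot_fs => // r IHr fs slot_fs size_fs.
apply: (reachable_of_monomials (r := size fs)) => // a size_a pos_a.
apply: (reachable_monomials reach_next) => // fs' size_fs' slot_fs'.
by apply: IHr => //; apply: leq_trans size_fs' _; rewrite size_a -ltnS.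
Qed.

End Reachability.

Unset Implicit Arguments. Set Strict Implicit. Set Printing Implicit Defensive.

Theorem lemma2p9 (b : seq nat) (gamma : nat) :
  all (fun x => 0 < x)%N b -> (0 < gamma)%N ->
  exists (c0 : {poly 'Z_(3 ^ gamma)} * nat)
         (L : seq (({poly 'Z_(3 ^ gamma)} * nat) * seq nat)),
    all (fun t => (t.2 != [::]) && all (fun x => (0 < x)%N && ~~ (3 %| x)%N) t.2) L /\
    forall n : nat,
      red gamma (Htilde b) n
      = laur c0 n + \sum_(t <- L) sprod (laur t.1) (red gamma (Htilde t.2)) n.
Proof.
move=> pos_b gamma_gt0.
have three_nilp : (3 ^ gamma)%:R = 0 :> 'Z_(3 ^ gamma).
  by apply: pchar_Zp; rewrite -(expn0 3) ltn_exp2l.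
have := @reachable_all _ gamma three_nilp gamma_gt0 gamma 0 _ (leqnn gamma)
  (slot_monomials _ pos_b).
rewrite /reachable expr0 mul1r -Htilde_msum => /asboolP[c0 [L [adm_L red_b]]].
exists c0, L; split => // n.
by rewrite [LHS](congr1 (fun f => f n) red_b) saddE ssumE.
Qed.
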